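(* With the notation of the context, let $\beta^*=\inf_{x\in\Delta}F(x)$. For every $x^*\in\Delta$ with $F(x^* )=\beta^*$ there exists a relation $r_0$ of type 4b such that $f_{r_0}(x^* )=\beta^*$.
   Context: Fix an integer $n\ge2$ and free generators $\xi_1,\dots,\xi_n$ of a free group; throughout $i,j,k\in\{1,\dots,n\}$ and $t,s,p\in\{-1,+1\}$. Let $\Psi$ be the set of reduced words $\xi_i^{2t}$; $\xi_i^t\xi_j^{2s}$ ($i\ne j$); $\xi_i^t\xi_j^s\xi_k^p$ ($i\ne j$, $j\ne k$). For a letter $\xi_a^x$ let $S(\xi_a^x)\subset\Psi$ be the set of words in $\Psi$ beginning with $\xi_a^x$, namely $\{\xi_a^{2x}\}\cup\{\xi_a^x\xi_j^{2s}\}\cup\{\xi_a^x\xi_j^s\xi_k^p\}$; for $a\ne b$ let $S(\xi_a^x\xi_b^y)=\{\xi_a^x\xi_b^{2y}\}\cup\{\xi_a^x\xi_b^y\xi_k^p: k\ne b\}$. A relation $r$ is a pair $(\psi_r,\Psi_r)$ with $\psi_r\in\Psi$, $\Psi_r\subseteq\Psi$. Let $\mathcal{F}$ be the collection of the following relations (indices $i_0\ne j_0$, in type 5a $i_0,j_0,k_0$ pairwise distinct, all signs arbitrary): 1a: $\psi_r=\xi_{i_0}^{2t_0}$, $\Psi_r=\Psi\setminus S(\xi_{i_0}^{t_0})$; 2b: $\psi_r=\xi_{i_0}^{t_0}\xi_{j_0}^{2s_0}$, $\Psi_r=\Psi\setminus S(\xi_{i_0}^{t_0}\xi_{j_0}^{s_0})$;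 3a: $\psi_r=\xi_{i_0}^{t_0}\xi_{j_0}^{s_0}\xi_{i_0}^{t_0}$, $\Psi_r=\Psi\setminus S(\xi_{j_0}^{s_0}\xi_{i_0}^{t_0})$; 4b: $\psi_r=\xi_{i_0}^{t_0}\xi_{j_0}^{s_0}\xi_{i_0}^{-t_0}$, $\Psi_r=S(\xi_{i_0}^{t_0})$; 5a: $\psi_r=\xi_{i_0}^{t_0}\xi_{j_0}^{s_0}\xi_{k_0}^{p_0}$, $\Psi_r=\Psi\setminus S(\xi_{j_0}^{s_0}\xi_{k_0}^{p_0})$. Let $\Delta=\{x\in\mathbb{R}^\Psi: x(\psi)>0\ \forall\psi,\ \sum_{\psi}x(\psi)=1\}$. For a relation $r$ and $x\in\Delta$ put $x_r=x(\psi_r)$, $X_r=\sum_{\psi\in\Psi_r}x(\psi)$, $f_r(x)=\frac{1-x_r}{x_r}\cdot\frac{1-X_r}{X_r}$, and $F(x)=\max_{r\in\mathcal{F}}f_r(x)$. *)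

From HB Require Import structures.
From mathcomp Require Import all_boot all_order all_algebra.
From mathcomp Require Import reals.
Set Implicit Arguments. Unset Strict Implicit. Unset Printing Implicit Defensive.
Import Order.TTheory GRing.Theory Num.Theory.
Local Open Scope ring_scope.

(* A letter xi_i^t : generator index i : 'I_n and sign t (true = +1, false = -1). *)
Definition letter (n : nat) := ('I_n * bool)%type.

(* Raw encoding of a word of length 2 (a,b,None) = a b
   or of length 3 (a,b,Some c) = a b c. *)
Definition rawword (n : nat) := (letter n * letter n * option (letter n))%type.

(* Membership in Psi:
   - length 2: xi_i^{2t}, i.e. the two letters are equal;
   - length 3: xi_i^t xi_j^s xi_k^p reduced with i <> j, and either j <> k
     (type xi_i^t xi_j^s xi_k^p) or the last two letters coincide
     (type xi_i^t xi_j^{2s}). *)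
Definition inPsi (n : nat) (w : rawword n) : bool :=
  match w with
  | (a, b, None) => a == b
  | (a, b, Some c) => (a.1 != b.1) && ((b.1 != c.1) || (b == c))
  end.

Definition Psi (n : nat) := {w : rawword n | inPsi w}.

Definition wseq (n : nat) (w : Psi n) : seq (letter n) :=
  match val w with
  | (a, b, None) => [:: a; b]
  | (a, b, Some c) => [:: a; b; c]
  end.

Definition Spre (n : nat) (u : seq (letter n)) : {set Psi n} :=
  [set w | take (size u) (wseq w) == u].

Definition relation (n : nat) := (Psi n * {set Psi n})%type.

Definition is1a (n : nat) (r : relation n) : bool :=
  [exists i0 : 'I_n, exists t0 : bool,
     (wseq r.1 == [:: (i0, t0); (i0, t0)]) && (r.2 == ~: Spre [:: (i0, t0)])].

Definition is2b (n : nat) (r : relation n) : bool :=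
  [exists i0 : 'I_n, exists j0 : 'I_n, exists t0 : bool, exists s0 : bool,
     [&& i0 != j0,
         wseq r.1 == [:: (i0, t0); (j0, s0); (j0, s0)] &
         r.2 == ~: Spre [:: (i0, t0); (j0, s0)]]].

Definition is3a (n : nat) (r : relation n) : bool :=
  [exists i0 : 'I_n, exists j0 : 'I_n, exists t0 : bool, exists s0 : bool,
     [&& i0 != j0,
         wseq r.1 == [:: (i0, t0); (j0, s0); (i0, t0)] &
         r.2 == ~: Spre [:: (j0, s0); (i0, t0)]]].

Definition is4b (n : nat) (r : relation n) : bool :=
  [exists i0 : 'I_n, exists j0 : 'I_n, exists t0 : bool, exists s0 : bool,
     [&& i0 != j0,
         wseq r.1 == [:: (i0, t0); (j0, s0); (i0, ~~ t0)] &
         r.2 == Spre [:: (i0, t0)]]].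

Definition is5a (n : nat) (r : relation n) : bool :=
  [exists i0 : 'I_n, exists j0 : 'I_n, exists k0 : 'I_n,
   exists t0 : bool, exists s0 : bool, exists p0 : bool,
     [&& i0 != j0, j0 != k0, i0 != k0,
         wseq r.1 == [:: (i0, t0); (j0, s0); (k0, p0)] &
         r.2 == ~: Spre [:: (j0, s0); (k0, p0)]]].

Definition inFam (n : nat) (r : relation n) : bool :=
  [|| is1a r, is2b r, is3a r, is4b r | is5a r].

Definition inDelta (R : realType) (n : nat) (x : Psi n -> R) : Prop :=
  (forall w, 0 < x w) /\ \sum_(w : Psi n) x w = 1.

Definition xr (R : realType) (n : nat) (x : Psi n -> R) (r : relation n) : R :=
  x r.1.

Definition Xr (R : realType) (n : nat) (x : Psi n -> R) (r : relation n) : R :=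
  \sum_(w in r.2) x w.

Definition fr (R : realType) (n : nat) (r : relation n) (x : Psi n -> R) : R :=
  ((1 - xr x r) / xr x r) * ((1 - Xr x r) / Xr x r).

(* F(x) = max_{r in F} f_r(x); the family is nonempty and f_r >= 0 on Delta,
   so 0 as the neutral element of max is harmless. *)
Definition Fmax (R : realType) (n : nat) (x : Psi n -> R) : R :=
  \big[Num.max/0]_(r : relation n | inFam r) fr r x.

(* Write f_r(x) = g(x_r) g(X_r) with g(a) = (1 - a)/a decreasing on (0, 1].
   Call a word conjugate if it has the form xi_a^x xi_b^y xi_a^-x: these are
   exactly the words psi_r of the relations of type 4b.  Every other word w
   has a conjugate companion c(w) with the same first two letters (or, for
   w = xi_a^2x, the same first letter), and each set S(u) occurring in a
   relation of type 1a, 2b, 3a or 5a is closed under c.  Moving a small mass t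
   from c(w) to w for every non-conjugate w therefore raises x_r by t without
   lowering X_r for all those relations, so it strictly decreases their f_r,
   while it changes every f_r of type 4b by O(t) only.  If no relation of type
   4b had f_r = beta^* at the minimiser, the moved point would have F < beta^*. *)

From mathcomp Require Import all_boot all_order all_algebra.
From mathcomp Require Import reals.
From mathcomp Require Import ring lra.
Set Implicit Arguments. Unset Strict Implicit. Unset Printing Implicit Defensive.
Import Order.TTheory GRing.Theory Num.Theory.
Local Open Scope ring_scope.

Section OddsAgainst.
Variable R : realFieldType.
Implicit Types a b m delta : R.

Definition odds_against a := (1 - a) / a.

Lemma odds_againstE a : a != 0 -> odds_against a = a^-1 - 1.
Proof. by move=> a_neq0; rewrite /odds_against mulrBl mul1r mulfV. Qed.

Lemma odds_against_ge0 a : 0 < a -> a <= 1 -> 0 <= odds_against a.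
Proof. by move=> a_gt0 a_le1; rewrite divr_ge0 ?subr_ge0 // ltW. Qed.

Lemma odds_against_gt0 a : 0 < a -> a < 1 -> 0 < odds_against a.
Proof. by move=> a_gt0 a_lt1; rewrite divr_gt0 ?subr_gt0. Qed.

Lemma odds_against_le_inv a : 0 < a -> odds_against a <= a^-1.
Proof. by move=> a_gt0; rewrite odds_againstE ?gt_eqF // gerBl. Qed.

Lemma odds_against_le a a' : 0 < a -> a <= a' -> odds_against a' <= odds_against a.
Proof.
move=> a_gt0 le_aa'; have a'_gt0 := lt_le_trans a_gt0 le_aa'.
by rewrite !odds_againstE ?gt_eqF // lerD2r lef_pV2.
Qed.

Lemma odds_against_lt a a' : 0 < a -> a < a' -> odds_against a' < odds_against a.
Proof.
move=> a_gt0 lt_aa'; have a'_gt0 := lt_trans a_gt0 lt_aa'.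
by rewrite !odds_againstE ?gt_eqF // ltrD2r ltf_pV2.
Qed.

Lemma odds_against_shift m delta a a' :
  0 < m -> 0 <= delta -> 2 * delta <= m -> m <= a -> a - delta <= a' ->
  odds_against a' <= odds_against a + 2 * delta / m ^+ 2.
Proof.
move=> m_gt0 delta_ge0 delta_le m_le_a a'_ge.
have a_gt0 : 0 < a by lra.
have a'_gt0 : 0 < a' by lra.
rewrite !odds_againstE ?gt_eqF // -lerBlDl opprB addrA subrK.
have -> : a'^-1 - a^-1 = (a - a') / (a * a') by field; rewrite ?gt_eqF.
rewrite ler_pdivrMr ?mulr_gt0 // mulrAC ler_pdivlMr ?exprn_gt0 //.
have : m ^+ 2 <= 2 * (a * a') by rewrite expr2; nra.
nra.
Qed.

Lemma mul_odds_against_lt a b a' b' :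
  0 < a -> a < a' -> 0 < b -> b <= b' -> b < 1 -> a' <= 1 ->
  odds_against a' * odds_against b' < odds_against a * odds_against b.
Proof.
move=> a_gt0 lt_aa' b_gt0 le_bb' b_lt1 a'_le1.
apply: (le_lt_trans (y := odds_against a' * odds_against b)).
  by rewrite ler_wpM2l ?odds_against_le // odds_against_ge0 //; lra.
by rewrite ltr_pM2r ?odds_against_lt ?odds_against_gt0.
Qed.

Lemma mul_odds_against_shift m delta a b a' b' :
  0 < m -> 0 <= delta -> 2 * delta <= m ->
  m <= a -> m <= b -> a <= 1 -> b <= 1 -> a' <= 1 -> b' <= 1 ->
  a - delta <= a' -> b - delta <= b' ->
  odds_against a' * odds_against b' <=
    odds_against a * odds_against b + 6 * delta / m ^+ 3.
Proof.
move=> m_gt0 delta_ge0 delta_le m_le_a m_le_b a_le1 b_le1 a'_le1 b'_le1 a'_ge b'_ge.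
set e := 2 * delta / m ^+ 2.
have e_ge0 : 0 <= e by rewrite divr_ge0 ?mulr_ge0 ?exprn_ge0 // ltW.
have e_le : e <= m^-1.
  by rewrite /e ler_pdivrMr ?exprn_gt0 // expr2 mulrA mulVf ?gt_eqF // mul1r.
have bound c : m <= c -> c <= 1 -> 0 <= odds_against c <= m^-1.
  move=> m_le_c c_le1; have c_gt0 : 0 < c by lra.
  rewrite odds_against_ge0 //= (le_trans (odds_against_le_inv c_gt0)) //.
  by rewrite lef_pV2 ?posrE.
have /andP[A_ge0 A_le] := bound _ m_le_a a_le1.
have /andP[B_ge0 B_le] := bound _ m_le_b b_le1.
have A'_ge0 : 0 <= odds_against a' by apply: odds_against_ge0; lra.
have A'_le := odds_against_shift m_gt0 delta_ge0 delta_le m_le_a a'_ge.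
have B'_le := odds_against_shift m_gt0 delta_ge0 delta_le m_le_b b'_ge.
have -> : 6 * delta / m ^+ 3 = 3 * e * m^-1.
  by rewrite /e exprSr; field; rewrite gt_eqF.
rewrite -/e in A'_le B'_le.
move: (odds_against a) (odds_against b) (odds_against a') (odds_against b') (m^-1)
  A_ge0 A_le B_ge0 B_le A'_ge0 A'_le B'_le e_le => A B A' B' c *.
nra.
Qed.

End OddsAgainst.

Definition is_conj_word n (w : Psi n) : bool :=
  if wseq w is [:: a; _; c] then c == (a.1, ~~ a.2) else false.

Definition closed_under n (f : Psi n -> Psi n) (S : {set Psi n}) : Prop :=
  forall w, w \in S -> f w \in S.

Lemma setC_Spre_cons_neq0 n (l : letter n) u : ~: Spre (l :: u) != set0.
Proof.
have w_in : inPsi ((l.1, ~~ l.2), (l.1, ~~ l.2), None) by rewrite /inPsi eqxx.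
apply/set0Pn; exists (exist (fun w => inPsi w) _ w_in).
by rewrite !inE /wseq /= eqseq_cons; case: l {w_in} => i [] /=; rewrite xpair_eqE andbF.
Qed.

Lemma Spre1_neq0 n (l : letter n) : Spre [:: l] != set0.
Proof.
have w_in : inPsi (l, l, None) by rewrite /inPsi eqxx.
by apply/set0Pn; exists (exist (fun w => inPsi w) _ w_in); rewrite inE.
Qed.

Lemma Spre2_neq0 n (l1 l2 : letter n) : l1.1 != l2.1 -> Spre [:: l1; l2] != set0.
Proof.
move=> neq_l12.
have w_in : inPsi (l1, l2, Some l2) by rewrite /inPsi neq_l12 /= !eqxx orbT.
by apply/set0Pn; exists (exist (fun w => inPsi w) _ w_in); rewrite inE.
Qed.

Section ConjCompletion.
Variables (n : nat) (oth : 'I_n -> 'I_n).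
Hypothesis oth_neq : forall i, oth i != i.

Definition conj_completion_raw (w : rawword n) : rawword n :=
  match w with
  (* [xi_a^2x] has no second letter to keep; any index other than [a] will do. *)
  | (a, _, None) => (a, (oth a.1, true), Some (a.1, ~~ a.2))
  | (a, b, Some _) => (a, b, Some (a.1, ~~ a.2))
  end.

Lemma inPsi_conj_completion_raw w : inPsi w -> inPsi (conj_completion_raw w).
Proof.
case: w => [[a b] [c|]]; rewrite /inPsi /=.
- by case/andP=> neq_ab _; rewrite neq_ab /= eq_sym neq_ab.
- by move=> _; rewrite eq_sym oth_neq.
Qed.

Definition conj_completion (w : Psi n) : Psi n :=
  exist (fun w => inPsi w) _ (inPsi_conj_completion_raw (valP w)).

Lemma conj_completion_is_conj w : is_conj_word (conj_completion w).
Proof. by case: w => [[[a b] [c|]] w_in]; rewrite /is_conj_word /wseq /=. Qed.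

Lemma closed_conj_completion_Spre1 l :
  closed_under conj_completion (Spre [:: l]).
Proof. by case=> [[[a b] [c|]] w_in]; rewrite !inE /wseq. Qed.

Lemma closed_conj_completion_Spre2 l1 l2 : l1.1 != l2.1 ->
  closed_under conj_completion (Spre [:: l1; l2]).
Proof.
move=> neq_l12 [[[a b] [c|]] w_in]; rewrite !inE /wseq //=.
by move/eqP: w_in => <- /eqP[eq_l1 eq_l2]; rewrite -eq_l1 -eq_l2 eqxx in neq_l12.
Qed.

Lemma inFam_not4b r : inFam r -> ~~ is4b r ->
  ~~ is_conj_word r.1 /\
  exists2 S, r.2 = ~: S & [/\ closed_under conj_completion S, S != set0 & ~: S != set0].
Proof.
rewrite /inFam => r_fam not4b; rewrite (negbTE not4b) /= in r_fam.
case/or4P: r_fam.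
- case/existsP=> i /existsP[t /andP[/eqP r1 /eqP r2]].
  split; first by rewrite /is_conj_word r1.
  exists (Spre [:: (i, t)]) => //; split.
  + exact: closed_conj_completion_Spre1.
  + exact: Spre1_neq0.
  + exact: setC_Spre_cons_neq0.
- case/existsP=> i /existsP[j /existsP[t /existsP[s /and3P[neq_ij /eqP r1 /eqP r2]]]].
  split; first by rewrite /is_conj_word r1 xpair_eqE eq_sym (negbTE neq_ij).
  exists (Spre [:: (i, t); (j, s)]) => //; split.
  + exact: closed_conj_completion_Spre2.
  + exact: Spre2_neq0.
  + exact: setC_Spre_cons_neq0.
- case/existsP=> i /existsP[j /existsP[t /existsP[s /and3P[neq_ij /eqP r1 /eqP r2]]]].
  split; first by rewrite /is_conj_word r1 xpair_eqE eqxx; case: t {r1 r2}.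
  have neq_ji : (j, s).1 != (i, t).1 by rewrite eq_sym.
  exists (Spre [:: (j, s); (i, t)]) => //; split.
  + exact: closed_conj_completion_Spre2.
  + exact: Spre2_neq0.
  + exact: setC_Spre_cons_neq0.
- case/existsP=> i /existsP[j /existsP[k /existsP[t /existsP[s /existsP[p]]]]].
  case/and5P=> neq_ij neq_jk neq_ik /eqP r1 /eqP r2.
  split; first by rewrite /is_conj_word r1 xpair_eqE eq_sym (negbTE neq_ik).
  exists (Spre [:: (j, s); (k, p)]) => //; split.
  + exact: closed_conj_completion_Spre2.
  + exact: Spre2_neq0.
  + exact: setC_Spre_cons_neq0.
Qed.

Section Transfer.
Variable R : realDomainType.

Definition transfer (A : {set Psi n}) : R :=
  \sum_(w | ~~ is_conj_word w) ((w \in A)%:R - (conj_completion w \in A)%:R).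

Lemma sum_transfer1 (A : {set Psi n}) :
  \sum_(v in A) transfer [set v] = transfer A.
Proof.
rewrite exchange_big; apply: eq_bigr => w _; rewrite sumrB.
have indicator u : \sum_(v in A) (u \in [set v])%:R = (u \in A)%:R :> R.
  have [u_in|u_nin] := boolP (u \in A).
    rewrite (bigD1 u) //= inE eqxx big1 ?addr0 // => v /andP[_ neq_vu].
    by rewrite inE eq_sym (negbTE neq_vu).
  by rewrite big1 // => v v_in; rewrite inE; case: eqP v_in u_nin => // -> ->.
by rewrite !indicator.
Qed.

Lemma transfer_setT : transfer setT = 0.
Proof. by rewrite /transfer big1 // => w _; rewrite !inE subrr. Qed.

Lemma transfer_ge (A : {set Psi n}) : - #|{: Psi n}|%:R <= transfer A.
Proof.
apply: le_trans (_ : - \sum_(w : Psi n | ~~ is_conj_word w) 1 <= _).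
  by rewrite lerN2 sumr_const ler_nat max_card.
rewrite -sumrN; apply: ler_sum => w _.
by case: (w \in A); case: (conj_completion w \in A) => /=; lra.
Qed.

Lemma transfer_setC_ge0 (S : {set Psi n}) :
  closed_under conj_completion S -> 0 <= transfer (~: S).
Proof.
move=> S_closed; apply: sumr_ge0 => w _; rewrite !inE subr_ge0 ler_nat.
by case: (boolP (w \in S)) => [/S_closed ->|_]; rewrite ?leq_b1.
Qed.

Lemma transfer1 v : ~~ is_conj_word v -> transfer [set v] = 1.
Proof.
move=> v_nconj; rewrite /transfer (bigD1 v) //= big1 => [|w /andP[_ neq_wv]].
  rewrite !inE eqxx; case: eqP => [conj_v|_]; last by rewrite subr0 addr0.
  by rewrite -conj_v conj_completion_is_conj in v_nconj.
rewrite !inE (negbTE neq_wv); case: eqP => [conj_w|_]; last by rewrite subrr.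
by rewrite -conj_w conj_completion_is_conj in v_nconj.
Qed.

End Transfer.

End ConjCompletion.

Lemma is4b_inFam n (r : relation n) : is4b r -> inFam r.
Proof. by move=> r_4b; rewrite /inFam r_4b /=; do 3 (apply/orP; right). Qed.

Lemma is4b_mem n (r : relation n) : is4b r -> r.1 \in r.2.
Proof.
case/existsP=> i /existsP[j /existsP[t /existsP[s /and3P[_ /eqP r1 /eqP ->]]]].
by rewrite inE r1.
Qed.

Lemma exists_is4b n : (2 <= n)%N -> exists r : relation n, is4b r.
Proof.
move=> n_ge2; pose i : 'I_n := Ordinal (ltnW n_ge2); pose j : 'I_n := Ordinal n_ge2.
have w_in : inPsi ((i, true), (j, true), Some (i, false)) by [].
exists (exist (fun w => inPsi w) _ w_in, Spre [:: (i, true)]).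
by apply/existsP; exists i; apply/existsP; exists j; apply/existsP; exists true;
  apply/existsP; exists true; rewrite eqxx /= eqxx.
Qed.

Lemma exists_fixfree_ord n : (2 <= n)%N -> exists f : 'I_n -> 'I_n, forall i, f i != i.
Proof.
move=> n_ge2; pose i0 : 'I_n := Ordinal (ltnW n_ge2); pose j0 : 'I_n := Ordinal n_ge2.
exists (fun i => if i == i0 then j0 else i0) => i /=.
by have [->|] := eqVneq i i0; last rewrite eq_sym.
Qed.

Section Simplex.
Variables (R : realType) (n : nat) (x : Psi n -> R).
Hypothesis x_Delta : inDelta x.

Lemma sum_Delta_setC (A : {set Psi n}) :
  \sum_(w in ~: A) x w = 1 - \sum_(w in A) x w.
Proof.
have [_ <-] := x_Delta; rewrite [X in X - _](bigID (mem A)) /= addrC addrK.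
by apply: eq_bigl => w; rewrite inE.
Qed.

Lemma sum_Delta_gt0 (A : {set Psi n}) : A != set0 -> 0 < \sum_(w in A) x w.
Proof.
have [x_gt0 _] := x_Delta; case/set0Pn=> v v_in.
by rewrite (bigD1 v) //= ltr_pwDl ?sumr_ge0 // => w _; rewrite ltW.
Qed.

Lemma sum_Delta_le1 (A : {set Psi n}) : \sum_(w in A) x w <= 1.
Proof.
have [x_gt0 _] := x_Delta.
by rewrite -(setCK A) sum_Delta_setC gerBl sumr_ge0 // => w _; rewrite ltW.
Qed.

Lemma Delta_le_sum (A : {set Psi n}) w : w \in A -> x w <= \sum_(v in A) x v.
Proof.
have [x_gt0 _] := x_Delta; move=> w_in.
by rewrite (bigD1 w) //= lerDl sumr_ge0 // => v _; rewrite ltW.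
Qed.

Lemma card_Delta_gt0 : (0 < #|{: Psi n}|)%N.
Proof.
have [_ x_sum1] := x_Delta; rewrite -cardsT card_gt0.
case: (pickP (fun w : Psi n => true)) => [w _|no_w].
  by apply/set0Pn; exists w; rewrite inE.
by move: x_sum1; rewrite big_pred0 // => /eqP; rewrite eq_sym oner_eq0.
Qed.

Lemma Delta_le1 w : x w <= 1.
Proof. by have := sum_Delta_le1 [set w]; rewrite big_set1. Qed.

Lemma fr_ge0 (r : relation n) : 0 <= fr r x.
Proof.
have [x_gt0 _] := x_Delta.
have xr_ge0 : 0 <= xr x r := ltW (x_gt0 _).
have Xr_ge0 : 0 <= Xr x r by rewrite sumr_ge0 // => w _; rewrite ltW.
have xr_le1 : xr x r <= 1 := Delta_le1 _.
have Xr_le1 : Xr x r <= 1 := sum_Delta_le1 _.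
by rewrite /fr mulr_ge0 ?divr_ge0 ?subr_ge0.
Qed.

End Simplex.

Lemma fr_le_Fmax (R : realType) n (r : relation n) (x : Psi n -> R) :
  inFam r -> fr r x <= Fmax x.
Proof. by move=> r_fam; rewrite /Fmax (bigD1 r) //= le_max lexx. Qed.

Lemma Fmax_lt (R : realType) n (x : Psi n -> R) M :
  0 < M -> (forall r, inFam r -> fr r x < M) -> Fmax x < M.
Proof.
move=> M_gt0 fr_lt; apply: (big_ind (fun y => y < M)) => // a b a_lt b_lt.
by rewrite gt_max a_lt b_lt.
Qed.

Lemma fr_odds (R : realType) n (r : relation n) (x : Psi n -> R) :
  fr r x = odds_against (xr x r) * odds_against (Xr x r).
Proof. by []. Qed.

Section Perturbation.
Variables (R : realType) (n : nat) (oth : 'I_n -> 'I_n).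
Hypothesis oth_neq : forall i, oth i != i.
Variable xs : Psi n -> R.
Hypothesis xs_Delta : inDelta xs.

Local Notation N := (#|{: Psi n}|%:R : R).

Section Step.
Variable t : R.
Hypothesis t_gt0 : 0 < t.

Definition perturb v := xs v + t * transfer oth_neq R [set v].

Lemma sum_perturb (A : {set Psi n}) :
  \sum_(v in A) perturb v = \sum_(v in A) xs v + t * transfer oth_neq R A.
Proof. by rewrite big_split /= -mulr_sumr sum_transfer1. Qed.

Lemma sum_perturb_ge (A : {set Psi n}) :
  \sum_(v in A) xs v - t * N <= \sum_(v in A) perturb v.
Proof.
by rewrite sum_perturb lerD2l -mulrN; apply: ler_wpM2l; [exact: ltW | exact: transfer_ge].
Qed.

Lemma perturb_Delta : (forall w, t * N < xs w) -> inDelta perturb.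
Proof.
move=> tN_lt; split=> [v|].
  by have := sum_perturb_ge [set v]; rewrite !big_set1 => le_v; have := tN_lt v; lra.
have sum_setT (F : Psi n -> R) : \sum_v F v = \sum_(v in [set: Psi n]) F v.
  by apply: eq_bigl => v; rewrite inE.
have [_ xs_sum1] := xs_Delta.
by rewrite sum_setT sum_perturb transfer_setT mulr0 addr0 -sum_setT.
Qed.

Hypothesis perturb_in_Delta : inDelta perturb.

Lemma fr_perturb_lt r : inFam r -> ~~ is4b r -> fr r perturb < fr r xs.
Proof.
move=> r_fam not4b; have [xs_gt0 _] := xs_Delta.
have [nconj [S r2 [S_closed S_neq0 SC_neq0]]] := inFam_not4b oth_neq r_fam not4b.
rewrite !fr_odds; apply: mul_odds_against_lt.
- exact: xs_gt0.
- by rewrite /xr /perturb transfer1 // mulr1 ltrDl.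
- by rewrite /Xr r2 sum_Delta_gt0.
- by rewrite /Xr sum_perturb lerDl r2 mulr_ge0 ?(ltW t_gt0) ?transfer_setC_ge0.
- by rewrite /Xr r2 sum_Delta_setC // gtrBl sum_Delta_gt0.
- exact: Delta_le1.
Qed.

Lemma fr_perturb_le r m : is4b r -> 0 < m -> (forall w, m <= xs w) ->
  2 * (t * N) <= m -> fr r perturb <= fr r xs + 6 * (t * N) / m ^+ 3.
Proof.
move=> r_4b m_gt0 m_le tN_le.
have m_le_Xr : m <= Xr xs r.
  exact: le_trans (m_le r.1) (Delta_le_sum _ (is4b_mem r_4b)).
have xr_ge : xr xs r - t * N <= xr perturb r.
  by have := sum_perturb_ge [set r.1]; rewrite !big_set1.
rewrite !fr_odds; apply: mul_odds_against_shift; rewrite ?sum_perturb_ge //.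
- by rewrite mulr_ge0 ?ler0n ?(ltW t_gt0).
- exact: m_le.
- exact: Delta_le1.
- exact: sum_Delta_le1.
- exact: Delta_le1.
- exact: sum_Delta_le1.
Qed.

End Step.

Lemma exists_Fmax_lt (M : R) : 0 < M ->
  (forall r, inFam r -> fr r xs <= M) -> (forall r, is4b r -> fr r xs < M) ->
  exists2 x : Psi n -> R, inDelta x & Fmax x < M.
Proof.
move=> M_gt0 fr_le fr4_lt; have [xs_gt0 _] := xs_Delta.
pose m := \big[Num.min/1]_w xs w.
have m_gt0 : 0 < m by apply: lt_bigmin.
have m_le w : m <= xs w := bigmin_le _ _ _.
have m_le1 : m <= 1 := bigmin_le_id _ _ _ _.
pose d := \big[Num.min/1]_(r | is4b r) (M - fr r xs).
have d_gt0 : 0 < d by apply: lt_bigmin => // r r_4b; rewrite subr_gt0 fr4_lt.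
have d_le r : is4b r -> d <= M - fr r xs := bigmin_le_cond _ _.
have d_le1 : d <= 1 := bigmin_le_id _ _ _ _.
pose delta := d * m ^+ 3 / 12.
have N_gt0 : 0 < N by rewrite ltr0n (card_Delta_gt0 xs_Delta).
pose t := delta / N.
have t_gt0 : 0 < t by rewrite !divr_gt0 ?mulr_gt0 ?exprn_gt0.
have tN : t * N = delta by rewrite /t mulfVK ?gt_eqF.
have m3_le : m ^+ 3 <= m by rewrite exprS ger_pMr // exprn_ile1 // ltW.
have delta_le : 2 * delta <= m by rewrite /delta; nra.
have p_Delta : inDelta (perturb t).
  by apply: (perturb_Delta t_gt0) => w; rewrite tN; have := m_le w; lra.
exists (perturb t) => //; apply: Fmax_lt => // r r_fam.
have [r_4b|not4b] := boolP (is4b r).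
  have := fr_perturb_le t_gt0 p_Delta r_4b m_gt0 m_le; rewrite tN => /(_ delta_le).
  have -> : 6 * delta / m ^+ 3 = d / 2.
    by rewrite /delta; field; rewrite gt_eqF ?exprn_gt0.
  by have := d_le r r_4b; lra.
exact: lt_le_trans (fr_perturb_lt t_gt0 p_Delta r_fam not4b) (fr_le r r_fam).
Qed.

End Perturbation.

Theorem lemma5p4 (R : realType) (n : nat) (hn : (2 <= n)%N)
  (xs : Psi n -> R) :
  inDelta xs ->
  (forall x : Psi n -> R, inDelta x -> Fmax xs <= Fmax x) ->
  exists r0 : relation n, is4b r0 /\ fr r0 xs = Fmax xs.
Proof.
move=> xs_Delta xs_min.
have [r_attain|no_attain] := boolP [exists r, is4b r && (fr r xs == Fmax xs)].
  by have /existsP[r /andP[r_4b /eqP]] := r_attain; exists r.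
have fr4_lt r : is4b r -> fr r xs < Fmax xs.
  move=> r_4b; rewrite lt_def fr_le_Fmax ?is4b_inFam // andbT.
  by apply: contraNneq no_attain => ->; apply/existsP; exists r; rewrite r_4b eqxx.
have [oth oth_neq] := exists_fixfree_ord hn.
have [r4 r4_4b] := exists_is4b hn.
have Fmax_gt0 : 0 < Fmax xs := le_lt_trans (fr_ge0 xs_Delta r4) (fr4_lt r4 r4_4b).
have [x x_Delta] :=
  exists_Fmax_lt oth_neq xs_Delta Fmax_gt0 (fun r => @fr_le_Fmax _ _ r xs) fr4_lt.
by rewrite ltNge xs_min.
Qed.
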